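(* Let $d\ge2$, let $f$ be a contractive function on pairs of $d$-dimensional states which is, in addition, continuous. Let $(\Lambda_t)_{t\ge0}$ be any family of CPTP maps with $\Lambda_0=\mathrm{id}$, let $\rho,\sigma$ be states, and let $0=t_0<t_1<t_2<\dots$ be time steps such that the sequence $f_i:=f(\Lambda_{t_i}[\rho],\Lambda_{t_i}[\sigma])$ is non-increasing in $i$. Then there exist parameters $a_i\in[0,1]$ such that, with the CPTP (depolarizing) maps $W_{t_{i+1},t_i}[X]=a_i^{\,t_{i+1}-t_i}X+(1-a_i^{\,t_{i+1}-t_i})\,\mathrm{Tr}(X)\frac{\mathbb 1_d}{d}$ and the states $\mu_0=\rho$, $\tau_0=\sigma$, $\mu_{i+1}=W_{t_{i+1},t_i}[\mu_i]$, $\tau_{i+1}=W_{t_{i+1},t_i}[\tau_i]$, one has $f(\mu_i,\tau_i)=f_i$ for all $i$. In other words, any non-increasing profile of a contractive function can be reproduced by a CP-divisible (Markovian) evolution.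
   Context: A function $f(\rho,\sigma)$ is contractive if $f(\Lambda[\rho],\Lambda[\sigma])\le f(\rho,\sigma)$ for every CPTP map $\Lambda$ and all states $\rho,\sigma$. *)

From Stdlib Require Import Reals.
From mathcomp Require Import ssreflect ssrfun ssrbool eqtype ssrnat seq choice fintype bigop.
Set Implicit Arguments. Unset Strict Implicit.
Open Scope R_scope.

Record C := mkC { re : R; im : R }.
Definition C0 : C := mkC 0 0.
Definition C1 : C := mkC 1 0.
Definition RtoC (x : R) : C := mkC x 0.
Definition Cadd (z w : C) : C := mkC (re z + re w) (im z + im w).
Definition Copp (z : C) : C := mkC (- re z) (- im z).
Definition Csub (z w : C) : C := Cadd z (Copp w).
Definition Cmul (z w : C) : C :=
  mkC (re z * re w - im z * im w) (re z * im w + im z * re w).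
Definition Cconj (z : C) : C := mkC (re z) (- im z).
Definition Cmod (z : C) : R := sqrt (re z * re z + im z * im z).

Definition MatT (T : finType) := T -> T -> C.
Definition Mat (d : nat) := MatT (ordinal d).

Definition csum (T : finType) (F : T -> C) : C := \big[Cadd/C0]_(i : T) F i.

Definition trace (T : finType) (X : MatT T) : C := csum (fun i => X i i).

Definition hermitian (T : finType) (X : MatT T) : Prop :=
  forall i j, X j i = Cconj (X i j).

Definition psd (T : finType) (X : MatT T) : Prop :=
  hermitian X /\
  forall v : T -> C,
    0 <= re (csum (fun i => csum (fun j => Cmul (Cmul (Cconj (v i)) (X i j)) (v j)))).

Definition state (d : nat) (X : Mat d) : Prop := psd X /\ trace X = C1.

Definition linear_map (d : nat) (L : Mat d -> Mat d) : Prop :=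
  (forall X Y i j, L (fun a b => Cadd (X a b) (Y a b)) i j = Cadd (L X i j) (L Y i j)) /\
  (forall (c : C) X i j, L (fun a b => Cmul c (X a b)) i j = Cmul c (L X i j)).

(* the map id_k (x) L acting on matrices on C^k (x) C^d *)
Definition ampl (d k : nat) (L : Mat d -> Mat d) (M : MatT (prod (ordinal k) (ordinal d)))
  : MatT (prod (ordinal k) (ordinal d)) :=
  fun p q => L (fun a b => M (p.1, a) (q.1, b)) p.2 q.2.

Definition completely_positive (d : nat) (L : Mat d -> Mat d) : Prop :=
  forall (k : nat) (M : MatT (prod (ordinal k) (ordinal d))), psd M -> psd (ampl L M).

Definition trace_preserving (d : nat) (L : Mat d -> Mat d) : Prop :=
  forall X, trace (L X) = trace X.

Definition CPTP (d : nat) (L : Mat d -> Mat d) : Prop :=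
  linear_map L /\ completely_positive L /\ trace_preserving L.

Definition contractive (d : nat) (f : Mat d -> Mat d -> R) : Prop :=
  forall L : Mat d -> Mat d, CPTP L ->
  forall rho sigma, state rho -> state sigma -> f (L rho) (L sigma) <= f rho sigma.

Definition continuous_on_states (d : nat) (f : Mat d -> Mat d -> R) : Prop :=
  forall rho sigma, state rho -> state sigma ->
  forall eps, 0 < eps -> exists delta, 0 < delta /\
    forall rho' sigma', state rho' -> state sigma' ->
      (forall i j, Cmod (Csub (rho' i j) (rho i j)) < delta) ->
      (forall i j, Cmod (Csub (sigma' i j) (sigma i j)) < delta) ->
      Rabs (f rho' sigma' - f rho sigma) < eps.

(* real power a^s for a in [0,1], s > 0, with the convention 0^s = 0
   (Stdlib's Rpower would give Rpower 0 s = 1). *)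
Definition rpow (a s : R) : R :=
  if Rlt_dec 0 a then Rpower a s else 0.

Definition kron (d : nat) (i j : ordinal d) : C := if i == j then C1 else C0.

Definition depol (d : nat) (b : R) (X : Mat d) : Mat d :=
  fun i j => Cadd (Cmul (RtoC b) (X i j))
                  (Cmul (RtoC ((1 - b) / INR d)) (Cmul (trace X) (kron i j))).

Definition W (d : nat) (a t : nat -> R) (i : nat) : Mat d -> Mat d :=
  depol (rpow (a i) (t (S i) - t i)).

Fixpoint evol (d : nat) (a t : nat -> R) (rho : Mat d) (i : nat) : Mat d :=
  match i with
  | O => rho
  | S n => W a t n (evol a t rho n)
  end.

From Pilot Require Import Defs.
From Stdlib Require Import Reals.
From mathcomp Require Import ssreflect ssrfun ssrbool eqtype ssrnat seq choice fintype bigop.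
From HB Require Import structures.
From Stdlib Require Import Lra ClassicalEpsilon FunctionalExtensionality.
(* Re-import the definitions so that the complex type [C] is not shadowed by
   the binomial coefficient [C] of the real-number library. *)
Import Defs.
Set Implicit Arguments. Unset Strict Implicit.
Open Scope R_scope.

(* The profile f_0 >= f_1 >= ... is reproduced one step at a time by
   depolarizing the current pair (mu_i, tau_i), keeping f (mu_i, tau_i) = f_i.
   Along the path b |-> f (depol b mu_i, depol b tau_i), b in [0,1], the value
   at b = 1 is f_i >= f_{i+1}.  At b = 0 every state becomes the maximally
   mixed state; as X |-> Tr(X) 1/d is CPTP and sends every pair of states to
   that same pair, contractivity makes this value a global minimum of f on
   pairs of states, hence <= f_{i+1}.  The path is continuous, so by the
   intermediate value theorem some b_i in [0,1] yields exactly f_{i+1}, and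
   a_i := b_i^(1/(t_{i+1}-t_i)) gives W_{t_{i+1},t_i} = depol b_i. *)

Lemma Ceq (z w : C) : re z = re w -> im z = im w -> z = w.
Proof. by case: z => ??; case: w => ?? /= -> ->. Qed.

Ltac Csolve := repeat match goal with z : C |- _ => destruct z end;
  apply Ceq; rewrite /Cadd /Cmul /Copp /Csub /Cconj /RtoC /C0 /C1 /=; ring.

Lemma CaddA : associative Cadd. Proof. move=> *; Csolve. Qed.
Lemma CaddC : commutative Cadd. Proof. move=> *; Csolve. Qed.
Lemma Cadd0l : left_id C0 Cadd. Proof. move=> *; Csolve. Qed.
Lemma Cmul0l : left_zero C0 Cmul. Proof. move=> *; Csolve. Qed.
Lemma Cmul0r : right_zero C0 Cmul. Proof. move=> *; Csolve. Qed.
Lemma CmulDl : left_distributive Cmul Cadd. Proof. move=> *; Csolve. Qed.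
Lemma CmulDr : right_distributive Cmul Cadd. Proof. move=> *; Csolve. Qed.

HB.instance Definition _ := Monoid.isComLaw.Build C C0 Cadd CaddA CaddC Cadd0l.
HB.instance Definition _ := Monoid.isMulLaw.Build C C0 Cmul Cmul0l Cmul0r.
HB.instance Definition _ := Monoid.isAddLaw.Build C Cmul Cadd CmulDl CmulDr.

Lemma RplusA : associative Rplus. Proof. move=> *; ring. Qed.
Lemma RplusC : commutative Rplus. Proof. move=> *; ring. Qed.
Lemma Rplus0l : left_id 0 Rplus. Proof. move=> *; ring. Qed.
HB.instance Definition _ := Monoid.isComLaw.Build R 0 Rplus RplusA RplusC Rplus0l.

Section FiniteSums.
Variable T : finType.

Lemma csum_ext (F G : T -> C) : (forall i, F i = G i) -> csum F = csum G.
Proof. move=> H; rewrite /csum; apply: eq_bigr => i _; exact: H. Qed.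

Lemma csum_add (F G : T -> C) :
  csum (fun i => Cadd (F i) (G i)) = Cadd (csum F) (csum G).
Proof. by rewrite /csum big_split. Qed.

Lemma csum_mull (c : C) (F : T -> C) :
  csum (fun i => Cmul c (F i)) = Cmul c (csum F).
Proof. by rewrite /csum big_distrr. Qed.

Lemma csum0 : csum (fun _ : T => C0) = C0.
Proof. by rewrite /csum big1. Qed.

Lemma csum_kron (i : T) (F : T -> C) :
  csum (fun j => if i == j then F j else C0) = F i.
Proof.
rewrite /csum -big_mkcond /=.
by rewrite (eq_bigl (fun j => j == i)) ?big_pred1_eq // => j; rewrite eq_sym.
Qed.

Lemma csum_ge0 (F : T -> C) : (forall i, 0 <= re (F i)) -> 0 <= re (csum F).
Proof.
move=> H; rewrite /csum; apply: (big_ind (fun z => 0 <= re z)) => //=.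
- lra.
- move=> x y /= ??; lra.
Qed.

Lemma Cconj_csum (F : T -> C) : Cconj (csum F) = csum (fun i => Cconj (F i)).
Proof. rewrite /csum; apply: (big_morph Cconj) => [x y|]; Csolve. Qed.

Lemma finite_upper_bound (F : T -> R) : exists B, 0 < B /\ forall i, F i <= B.
Proof.
pose S := \big[Rplus/0]_(j : T) Rabs (F j).
have nonneg : forall P : pred T, 0 <= \big[Rplus/0]_(j | P j) Rabs (F j).
  move=> P; apply: (big_ind (fun z => 0 <= z)) => [|x y|j _]; [lra | lra | exact: Rabs_pos].
exists (1 + S); split; first by have := nonneg xpredT; rewrite /S; lra.
move=> i; rewrite /S (bigD1 i) //=.
have := nonneg (fun j => j != i); have := Rle_abs (F i); lra.
Qed.
End FiniteSums.

Lemma csum_exch (I J : finType) (F : I -> J -> C) :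
  csum (fun i => csum (fun j => F i j)) = csum (fun j => csum (fun i => F i j)).
Proof. by rewrite /csum exchange_big. Qed.

Lemma csum_pair (I J : finType) (G : I * J -> C) :
  csum G = csum (fun i => csum (fun j => G (i, j))).
Proof. by rewrite /csum pair_bigA; apply: eq_bigr => -[]. Qed.

Lemma csum_ord1 (F : ordinal 1 -> C) : csum F = F ord0.
Proof. by rewrite /csum big_ord1. Qed.

Lemma trace_id (d : nat) : csum (fun i : ordinal d => kron i i) = RtoC (INR d).
Proof.
rewrite (csum_ext (G := fun _ => C1)) => [|i]; last by rewrite /kron eqxx.
rewrite /csum big_const_ord; elim: d => [|n IH] /=; first exact: Ceq.
by rewrite IH; case: n {IH} => [|n]; apply: Ceq => /=; ring.
Qed.

Lemma Cmod_scal (r : R) (w : C) : Cmod (Cmul (RtoC r) w) = Rabs r * Cmod w.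
Proof.
case: w => x y; rewrite /Cmod /Cmul /RtoC /=.
have -> : (r * x - 0 * y) * (r * x - 0 * y) + (r * y + 0 * x) * (r * y + 0 * x)
  = Rsqr r * (x * x + y * y) by rewrite /Rsqr; ring.
rewrite sqrt_mult_alt ?sqrt_Rsqr_abs //; exact: Rle_0_sqr.
Qed.

Definition Qf (T : finType) (v : T -> C) (X : MatT T) : C :=
  csum (fun i => csum (fun j => Cmul (Cmul (Cconj (v i)) (X i j)) (v j))).

Lemma Qf_lift (d : nat) (N : Mat d) (V : ordinal 1 * ordinal d -> C) :
  Qf V (fun p q => N p.2 q.2) = Qf (fun a => V (ord0, a)) N.
Proof.
rewrite /Qf csum_pair csum_ord1; apply: csum_ext => i.
by rewrite csum_pair csum_ord1.
Qed.

(* CPTP maps send states to states: positivity follows from complete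
   positivity with a one-dimensional ancilla. *)
Lemma CPTP_state (d : nat) (L : Mat d -> Mat d) (X : Mat d) :
  CPTP L -> state X -> state (L X).
Proof.
move=> [_ [hcp htp]] [[hh hp] ht]; split; last by rewrite htp.
pose M : MatT (prod (ordinal 1) (ordinal d)) := fun p q => X p.2 q.2.
have hM : psd M.
  split; first by move=> p q; rewrite /M hh.
  by move=> V; rewrite -/(Qf V M) /M Qf_lift; exact: hp.
have [hh' hp'] := hcp 1%nat M hM; split.
- by move=> i j; exact: (hh' (ord0, i) (ord0, j)).
- move=> v; have := hp' (fun p => v p.2).
  have -> : ampl L M = fun p q => L X p.2 q.2 by [].
  by rewrite -/(Qf _ _) -/(Qf v (L X)) Qf_lift.
Qed.

Lemma depol_one (d : nat) (X : Mat d) : depol 1 X = X.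
Proof.
apply: functional_extensionality => i; apply: functional_extensionality => j.
rewrite /depol Rminus_diag /Rdiv Rmult_0_l.
move: (X i j) (Cmul (trace X) (kron i j)) => *; Csolve.
Qed.

Lemma depol_zero_trace (d : nat) (X Y : Mat d) :
  trace X = trace Y -> depol 0 X = depol 0 Y.
Proof.
move=> h; apply: functional_extensionality => i; apply: functional_extensionality => j.
rewrite /depol h; move: (X i j) (Y i j) (Cmul (trace Y) (kron i j)) => *; Csolve.
Qed.

Lemma depol_linear (d : nat) (b : R) : linear_map (depol (d:=d) b).
Proof.
split.
- move=> X Y i j; rewrite /depol /trace csum_add /kron; case: (i == j);
  move: (X i j) (Y i j) (csum (fun i => X i i)) (csum (fun i => Y i i)) => *; Csolve.
- move=> c X i j; rewrite /depol /trace csum_mull /kron; case: (i == j);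
  move: (X i j) (csum (fun i => X i i)) => *; Csolve.
Qed.

Lemma trace_depol (d : nat) (b : R) (X : Mat d) :
  (0 < d)%nat -> trace (depol b X) = trace X.
Proof.
move=> hd; rewrite /trace /depol csum_add.
rewrite (csum_mull (RtoC _) (fun i => Cmul _ (kron i i))).
rewrite (csum_mull _ (fun i => kron i i)) trace_id.
have hn : INR d <> 0 by apply: not_0_INR => hd0; move: hd; rewrite hd0.
rewrite csum_mull -/(trace X); by case: (trace X) => x y; apply: Ceq => /=; field.
Qed.

Lemma Qf_depol (d : nat) (b : R) (X : Mat d) (v : ordinal d -> C) :
  Qf v (depol b X) = Cadd (Cmul (RtoC b) (Qf v X))
     (Cmul (RtoC ((1 - b) / INR d))
           (Cmul (trace X) (csum (fun i => Cmul (Cconj (v i)) (v i))))).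
Proof.
rewrite /Qf /depol.
set c := RtoC ((1 - b) / INR d); set t := trace X.
transitivity (csum (fun i => Cadd
   (Cmul (RtoC b) (csum (fun j => Cmul (Cmul (Cconj (v i)) (X i j)) (v j))))
   (Cmul c (Cmul t (Cmul (Cconj (v i)) (v i)))))); last first.
  by rewrite csum_add !csum_mull.
apply: csum_ext => i.
transitivity (csum (fun j => Cadd (Cmul (RtoC b) (Cmul (Cmul (Cconj (v i)) (X i j)) (v j)))
   (Cmul c (Cmul t (if i == j then Cmul (Cconj (v i)) (v j) else C0))))).
  apply: csum_ext => j; rewrite /kron; case: eqP => _;
  move: (v i) (v j) (X i j) c t => *; Csolve.
by rewrite csum_add !csum_mull csum_kron.
Qed.

(* For b in [0,1] the depolarizing map is a convex combination of the
   identity and the completely depolarizing map, hence preserves states. *)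
Lemma state_depol (d : nat) (b : R) (X : Mat d) :
  (0 < d)%nat -> 0 <= b <= 1 -> state X -> state (depol b X).
Proof.
move=> hd hb [[hh hp] ht]; split; last by rewrite trace_depol.
split.
- move=> i j; rewrite /depol hh ht.
  have -> : kron j i = kron i j by rewrite /kron eq_sym.
  rewrite /kron; case: (i == j); move: (X i j) => *; Csolve.
- move=> v; rewrite -/(Qf v _) Qf_depol ht.
  have hQ := hp v; rewrite -/(Qf v X) in hQ.
  have hnorm : 0 <= re (csum (fun i => Cmul (Cconj (v i)) (v i))).
    by apply: csum_ge0 => i; move: (v i) => [x y] /=; nra.
  have hc : 0 <= (1 - b) / INR d.
    apply: Rmult_le_pos; first lra.
    by apply/Rlt_le/Rinv_0_lt_compat/lt_0_INR/ltP.
  move: (Qf v X) (csum _) hQ hnorm => [q1 q2] [s1 s2] /= ??; nra.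
Qed.

(* Complete positivity of the completely depolarizing map: for M on C^k (x) C^d, (id (x) depol 0) M = Tr_2(M) (x) 1/d, whose quadratic
   form at v is (1/d) sum_(a,b) w_ab^* M w_ab with the sliced vectors
   w_ab (p1, p2) = [p2 = a] v (p1, b).  Both sides are expanded to the same
   quadruple sum [slice_sum]. *)

Section CompletelyDepolarizing.
Variables (k d : nat) (M : MatT (prod (ordinal k) (ordinal d)))
  (v : prod (ordinal k) (ordinal d) -> C).

Definition slice (a b : ordinal d) (p : prod (ordinal k) (ordinal d)) : C :=
  if a == p.2 then v (p.1, b) else C0.

Definition slice_sum : C :=
  csum (fun b => csum (fun a => csum (fun p1 => csum (fun q1 =>
     Cmul (Cmul (Cconj (v (p1, b))) (v (q1, b))) (M (p1, a) (q1, a)))))).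

Lemma Qf_ampl_depol_zero :
  Qf v (ampl (depol 0) M) = Cmul (RtoC ((1 - 0) / INR d)) slice_sum.
Proof.
set c := RtoC ((1 - 0) / INR d).
transitivity (Cmul c (csum (fun p1 => csum (fun b => csum (fun q1 => csum (fun a =>
     Cmul (Cmul (Cconj (v (p1, b))) (v (q1, b))) (M (p1, a) (q1, a)))))))).
  rewrite /Qf csum_pair -csum_mull; apply: csum_ext => p1.
  rewrite -csum_mull; apply: csum_ext => b.
  rewrite csum_pair -csum_mull; apply: csum_ext => q1.
  rewrite -(csum_kron b (fun q2 => Cmul c (csum (fun a =>
     Cmul (Cmul (Cconj (v (p1, b))) (v (q1, q2))) (M (p1, a) (q1, a)))))).
  apply: csum_ext => q2; rewrite /ampl /depol /trace /kron /=.
  case: eqP => [<-|_].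
  - rewrite csum_mull.
    move: (v (p1, b)) (v (q1, b)) (M (p1, b) (q1, b)) (csum _) => *; rewrite /c; Csolve.
  - move: (v (p1, b)) (v (q1, q2)) (M (p1, b) (q1, q2)) (csum _) => *; rewrite /c; Csolve.
congr Cmul; rewrite /slice_sum csum_exch; apply: csum_ext => b.
transitivity (csum (fun p1 => csum (fun a => csum (fun q1 =>
     Cmul (Cmul (Cconj (v (p1, b))) (v (q1, b))) (M (p1, a) (q1, a)))))).
  by apply: csum_ext => p1; rewrite csum_exch.
by rewrite csum_exch.
Qed.

Lemma slices_Qf : csum (fun b => csum (fun a => Qf (slice a b) M)) = slice_sum.
Proof.
rewrite /slice_sum; apply: csum_ext => b; apply: csum_ext => a.
rewrite /Qf csum_pair; apply: csum_ext => p1.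
rewrite -(csum_kron a (fun p2 => csum (fun q1 =>
     Cmul (Cmul (Cconj (v (p1, b))) (v (q1, b))) (M (p1, p2) (q1, a))))).
apply: csum_ext => p2; rewrite /slice /=; case: eqP => [<-|_].
- rewrite csum_pair; apply: csum_ext => q1.
  rewrite -(csum_kron a (fun q2 =>
     Cmul (Cmul (Cconj (v (p1, b))) (v (q1, b))) (M (p1, a) (q1, q2)))).
  apply: csum_ext => q2 /=; case: eqP => _;
  move: (v (p1, b)) (v (q1, b)) (M (p1, a) (q1, q2)) => *; Csolve.
- transitivity (csum (fun _ : prod (ordinal k) (ordinal d) => C0)); last exact: csum0.
  apply: csum_ext => q.
  move: (M (p1, p2) q) (if a == q.2 then v (q.1, b) else C0) => *; Csolve.
Qed.
End CompletelyDepolarizing.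

Lemma depol_zero_CP (d : nat) : (0 < d)%nat -> completely_positive (depol (d:=d) 0).
Proof.
move=> hd k M [hh hp]; split.
- move=> p q; rewrite /ampl /depol /trace /=.
  have -> : csum (fun i => M (q.1, i) (p.1, i)) = Cconj (csum (fun i => M (p.1, i) (q.1, i))).
    by rewrite Cconj_csum; apply: csum_ext => i; rewrite hh.
  have -> : M (q.1, q.2) (p.1, p.2) = Cconj (M (p.1, p.2) (q.1, q.2)) by apply: hh.
  have -> : kron q.2 p.2 = kron p.2 q.2 by rewrite /kron eq_sym.
  rewrite /kron; case: (p.2 == q.2);
  move: (M (p.1, p.2) (q.1, q.2)) (csum _) => *; Csolve.
- move=> v; rewrite -/(Qf v _) Qf_ampl_depol_zero -slices_Qf.
  have hsum : 0 <= re (csum (fun b => csum (fun a => Qf (slice v a b) M))).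
    by apply: csum_ge0 => b; apply: csum_ge0 => a; exact: hp.
  have hc : 0 <= (1 - 0) / INR d.
    apply: Rmult_le_pos; first lra.
    by apply/Rlt_le/Rinv_0_lt_compat/lt_0_INR/ltP.
  move: (csum _) hsum => [z1 z2] /= ?; nra.
Qed.

Lemma depol_zero_CPTP (d : nat) : (0 < d)%nat -> CPTP (depol (d:=d) 0).
Proof.
move=> hd; split; [exact: depol_linear | split; first exact: depol_zero_CP].
by move=> X; exact: trace_depol.
Qed.

(* Every pair of states is mapped by the CPTP map [depol 0] to the same pair,
   so for a contractive f that pair is a global minimum of f on states. *)
Lemma contractive_depol_zero_min (d : nat) (f : Mat d -> Mat d -> R)
  (m s x y : Mat d) :
  (0 < d)%nat -> contractive f ->
  state m -> state s -> state x -> state y ->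
  f (depol 0 m) (depol 0 s) <= f x y.
Proof.
move=> hd hf hm hs hx hy.
rewrite (@depol_zero_trace _ m x); last by rewrite hm.2 hx.2.
rewrite (@depol_zero_trace _ s y); last by rewrite hs.2 hy.2.
exact: hf (depol_zero_CPTP hd) _ _ hx hy.
Qed.

(* Projection of the real line onto [0,1]; it is 1-Lipschitz, so composing
   with it turns continuity on [0,1] into continuity on all of R. *)
Definition clamp (b : R) : R := Rmax 0 (Rmin 1 b).

Lemma clamp_in (b : R) : 0 <= clamp b <= 1.
Proof. rewrite /clamp /Rmax /Rmin; repeat case: Rle_dec; lra. Qed.

Lemma clamp_id (b : R) : 0 <= b <= 1 -> clamp b = b.
Proof. rewrite /clamp /Rmax /Rmin; repeat case: Rle_dec; lra. Qed.

Lemma clamp_lipschitz (x y : R) : Rabs (clamp x - clamp y) <= Rabs (x - y).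
Proof.
rewrite /clamp /Rmax /Rmin /Rabs; repeat case: Rle_dec; repeat case: Rcase_abs; lra.
Qed.

(* depol b X is affine in b, hence Lipschitz in b entrywise. *)
Lemma depol_lipschitz (d : nat) (X : Mat d) : exists B, 0 < B /\
  forall b b0 i j, Cmod (Csub (depol b X i j) (depol b0 X i j)) <= B * Rabs (b - b0).
Proof.
pose D i j := Csub (X i j) (Cmul (RtoC (/ INR d)) (Cmul (trace X) (kron i j))).
have hD : forall b b0 i j, Csub (depol b X i j) (depol b0 X i j) = Cmul (RtoC (b - b0)) (D i j).
  move=> b b0 i j; rewrite /depol /D /Rdiv.
  move: (X i j) (Cmul (trace X) (kron i j)) => *; Csolve.
have [B [hB hBD]] := finite_upper_bound (fun p : prod (ordinal d) (ordinal d) => Cmod (D p.1 p.2)).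
exists B; split => // b b0 i j; rewrite hD Cmod_scal Rmult_comm.
by apply: Rmult_le_compat_r; [exact: Rabs_pos | exact: (hBD (i, j))].
Qed.

Lemma depol_path_continuous (d : nat) (f : Mat d -> Mat d -> R) (m s : Mat d) :
  (0 < d)%nat -> continuous_on_states f -> state m -> state s ->
  continuity (fun b => f (depol (clamp b) m) (depol (clamp b) s)).
Proof.
move=> hd hf hm hs b0 eps heps.
have [Bm [hBm Lm]] := depol_lipschitz m.
have [Bs [hBs Ls]] := depol_lipschitz s.
have [delta [hdel H]] := hf _ _ (state_depol hd (clamp_in b0) hm)
                                (state_depol hd (clamp_in b0) hs) eps heps.
exists (delta / (Bm + Bs)); split; first by apply/Rlt_gt/Rdiv_lt_0_compat; lra.
move=> x [_ hx]; rewrite /= /R_dist in hx *.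
have hclose : (Bm + Bs) * Rabs (clamp x - clamp b0) < delta.
  have := clamp_lipschitz x b0.
  have := Rmult_lt_compat_l (Bm + Bs) _ _ ltac:(lra) hx.
  have -> : (Bm + Bs) * (delta / (Bm + Bs)) = delta by field; lra.
  have := Rabs_pos (clamp x - clamp b0); nra.
have habs := Rabs_pos (clamp x - clamp b0).
apply: H; try exact: state_depol hd (clamp_in x) _.
- move=> i j; have := Lm (clamp x) (clamp b0) i j; nra.
- move=> i j; have := Ls (clamp x) (clamp b0) i j; nra.
Qed.

Lemma depol_path_attains (d : nat) (f : Mat d -> Mat d -> R) (m s : Mat d) (y : R) :
  (0 < d)%nat -> continuous_on_states f -> state m -> state s ->
  f (depol 0 m) (depol 0 s) <= y <= f m s ->
  exists b, 0 <= b <= 1 /\ f (depol b m) (depol b s) = y.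
Proof.
move=> hd hf hm hs [h0 h1].
pose g b := f (depol (clamp b) m) (depol (clamp b) s) - y.
have g0 : g 0 = f (depol 0 m) (depol 0 s) - y by rewrite /g clamp_id //; lra.
have g1 : g 1 = f m s - y by rewrite /g clamp_id ?depol_one //; lra.
case: (Req_dec y (f (depol 0 m) (depol 0 s))) => [->|ne0].
  by exists 0; split => //; lra.
case: (Req_dec y (f m s)) => [->|ne1].
  by exists 1; split; [lra | rewrite !depol_one].
have hg : continuity g.
  apply: continuity_minus; first exact: depol_path_continuous.
  exact: continuity_const.
have [z [hz hgz]] := IVT g 0 1 hg Rlt_0_1 ltac:(lra) ltac:(lra).
exists z; split => //; move: hgz; rewrite /g clamp_id //; lra.
Qed.

(* One step of the construction: any value of f on a pair of states below
   f m s is reached by depolarizing the pair (m, s), since the value at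
   b = 0 is a global minimum of f. *)
Lemma depolarizing_step (d : nat) (f : Mat d -> Mat d -> R) (m s x y : Mat d) :
  (0 < d)%nat -> contractive f -> continuous_on_states f ->
  state m -> state s -> state x -> state y -> f x y <= f m s ->
  exists b, 0 <= b <= 1 /\ state (depol b m) /\ state (depol b s) /\
    f (depol b m) (depol b s) = f x y.
Proof.
move=> hd hcontr hcont hm hs hx hy hle.
have [b [hb hfb]] : exists b, 0 <= b <= 1 /\ f (depol b m) (depol b s) = f x y.
  apply: depol_path_attains => //; split => //.
  exact: contractive_depol_zero_min.
by exists b; split; last split; [| exact: state_depol | split; [exact: state_depol |]].
Qed.

Definition rroot (b D : R) : R := if Rlt_dec 0 b then Rpower b (/ D) else 0.

Lemma rroot_spec (b D : R) : 0 <= b <= 1 -> 0 < D ->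
  0 <= rroot b D <= 1 /\ rpow (rroot b D) D = b.
Proof.
move=> hb hD; rewrite /rroot; case: Rlt_dec => hb0 /=; last first.
  by split; [lra | rewrite /rpow; case: Rlt_dec => /= ?; lra].
have ha : 0 < Rpower b (/ D) by rewrite /Rpower; apply: exp_pos.
split; last first.
  rewrite /rpow; case: Rlt_dec => [_|] //=.
  by rewrite Rpower_mult Rinv_l ?Rpower_1 //; lra.
split; first lra.
have hl : / D * ln b <= 0.
  have : ln b <= 0.
    case: hb => _ [hb1|->]; last by rewrite ln_1; right.
    by left; rewrite -ln_1; exact: ln_increasing.
  by have := Rinv_0_lt_compat _ hD; nra.
rewrite /Rpower -exp_0; case: hl => hl; last by rewrite hl; right.
by left; apply: exp_increasing.
Qed.

Section DepolarizingChain.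
Variables (d : nat) (g : nat -> Mat d -> Mat d -> R) (rho sigma : Mat d).

Fixpoint chain (i : nat) : Mat d * Mat d :=
  match i with
  | O => (rho, sigma)
  | S n => let p := chain n in (depol (g n p.1 p.2) p.1, depol (g n p.1 p.2) p.2)
  end.

Lemma chain_invariant (P : nat -> Mat d -> Mat d -> Prop) :
  P 0%nat rho sigma ->
  (forall i m s, P i m s -> P (S i) (depol (g i m s) m) (depol (g i m s) s)) ->
  forall i, P i (chain i).1 (chain i).2.
Proof. by move=> h0 hS; elim=> [|i IH] //=; exact: hS. Qed.

Lemma evol_chain (a t : nat -> R) :
  (forall i, rpow (a i) (t (S i) - t i) = g i (chain i).1 (chain i).2) ->
  forall i, evol a t rho i = (chain i).1 /\ evol a t sigma i = (chain i).2.
Proof. by move=> ha; elim=> [|i [IH1 IH2]] //=; rewrite /W IH1 IH2 ha. Qed.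
End DepolarizingChain.

Theorem mainTheorem8
  (d : nat) (hd : (2 <= d)%nat)
  (f : Mat d -> Mat d -> R)
  (hf_contr : contractive f)
  (hf_cont : continuous_on_states f)
  (Lam : R -> Mat d -> Mat d)
  (hLam : forall s, 0 <= s -> CPTP (Lam s))
  (hLam0 : forall X i j, Lam 0 X i j = X i j)
  (rho sigma : Mat d) (hrho : state rho) (hsigma : state sigma)
  (t : nat -> R) (ht0 : t O = 0) (ht : forall i, t i < t (S i))
  (hnoninc : forall i, f (Lam (t (S i)) rho) (Lam (t (S i)) sigma)
                       <= f (Lam (t i) rho) (Lam (t i) sigma)) :
  exists a : nat -> R,
    (forall i, 0 <= a i <= 1) /\
    (forall i, f (evol a t rho i) (evol a t sigma i)
               = f (Lam (t i) rho) (Lam (t i) sigma)).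
Proof.
have hd0 : (0 < d)%nat by apply: leq_trans hd.
pose target i := f (Lam (t i) rho) (Lam (t i) sigma).
have hLam_state : forall i X, state X -> state (Lam (t i) X).
  move=> i X hX; apply: CPTP_state hX; apply: hLam.
  by elim: i => [|i IH]; [rewrite ht0; lra | have := ht i; lra].
pose tracks i m s := state m /\ state s /\ f m s = target i.
pose good i m s b := 0 <= b <= 1 /\ tracks (S i) (depol b m) (depol b s).
pose g i m s := epsilon (inhabits 0) (good i m s).
have hg : forall i m s, tracks i m s -> good i m s (g i m s).
  move=> i m s [hm [hs hfms]]; apply: epsilon_spec.
  apply: depolarizing_step => //; try exact: hLam_state.
  by rewrite hfms; exact: hnoninc.
have htrack : forall i, tracks i (chain g rho sigma i).1 (chain g rho sigma i).2.
  apply: chain_invariant => [|i m s /hg []] //.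
  have hLam_id : forall X, Lam 0 X = X.
    by move=> X; do 2 apply: functional_extensionality => ?; exact: hLam0.
  by rewrite /tracks /target ht0 !hLam_id.
pose b i := g i (chain g rho sigma i).1 (chain g rho sigma i).2.
pose a i := rroot (b i) (t (S i) - t i).
have ha : forall i, 0 <= a i <= 1 /\ rpow (a i) (t (S i) - t i) = b i.
  move=> i; apply: rroot_spec; first exact: (hg _ _ _ (htrack i)).1.
  by have := ht i; lra.
exists a; split => [i|i]; first exact: (ha i).1.
have [-> ->] := evol_chain (fun i => (ha i).2) i.
by have [_ [_ ->]] := htrack i.
Qed.
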